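(* Fix an integer $k\geq1$ and $V=\{0,\ldots,k\}$. For Boolean functions $\varphi,\varphi'$ on $V$, we have $\mathrm{eul}(\varphi)=\mathrm{eul}(\varphi')$ if and only if $\varphi\simeq\varphi'$.
   Context: A valuation is a subset $\nu\subseteq V$; $\nu^{(l)}$ is $\nu$ with membership of $l$ flipped. A Boolean function on $V$ is a map $\varphi:2^V\to\{\text{false},\text{true}\}$; $\mathrm{sat}(\varphi)$ is its set of satisfying valuations; $\mathrm{eul}(\varphi)=\sum_{\nu\in\mathrm{sat}(\varphi)}(-1)^{|\nu|}$. Write $\varphi\xrightarrow{+(\nu,l)}\varphi'$ if $\nu,\nu^{(l)}\notin\mathrm{sat}(\varphi)$ and $\mathrm{sat}(\varphi')=\mathrm{sat}(\varphi)\cup\{\nu,\nu^{(l)}\}$, and $\varphi\xrightarrow{-(\nu,l)}\varphi'$ if $\varphi'\xrightarrow{+(\nu,l)}\varphi$. Write $\varphi\xrightarrow{\pm}\varphi'$ if one of these holds for some $\nu,l$; $\simeq$ is the reflexive-transitive closure of $\xrightarrow{\pm}$ (an equivalence relation). *)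

From mathcomp Require Import all_boot all_order all_algebra.
From Stdlib Require Import Relations.
Set Implicit Arguments. Unset Strict Implicit. Unset Printing Implicit Defensive.
Import GRing.Theory Num.Theory.
Local Open Scope ring_scope.

(* Variables V = {0,...,k} = 'I_k.+1 ; valuations are subsets of V. *)
Definition valuation (k : nat) := {set 'I_k.+1}.

Definition boolfun (k : nat) := {ffun valuation k -> bool}.

Definition flip (k : nat) (nu : valuation k) (l : 'I_k.+1) : valuation k :=
  if l \in nu then nu :\ l else l |: nu.

Definition sat (k : nat) (phi : boolfun k) : {set valuation k} :=
  [set nu | phi nu].

Definition eul (k : nat) (phi : boolfun k) : int :=
  \sum_(nu in sat phi) (-1) ^+ #|nu|.

Definition step_plus (k : nat) (phi phi' : boolfun k) (nu : valuation k)
    (l : 'I_k.+1) : Prop :=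
  nu \notin sat phi /\ flip nu l \notin sat phi /\
  sat phi' = sat phi :|: [set nu; flip nu l].

Definition step_pm (k : nat) (phi phi' : boolfun k) : Prop :=
  exists (nu : valuation k) (l : 'I_k.+1),
    step_plus phi phi' nu l \/ step_plus phi' phi nu l.

Definition equiv_bf (k : nat) : relation (boolfun k) :=
  clos_refl_trans (boolfun k) (@step_pm k).

(* Moves preserve [eul] because adjacent valuations have opposite parity.
   Conversely, toggling two valuations whose toggles change [eul] by opposite
   amounts is a composite of moves: walk from one to the other along a
   Hamming-shortest path, toggling one adjacent pair per step.  If
   [eul phi = eul phi'], the toggles turning [sat phi] into [sat phi'] each
   change [eul] by [+-1] and these changes sum to zero, so two of opposite sign
   can be performed together; induct on the size of the symmetric difference. *)

From mathcomp Require Import all_boot all_order all_algebra.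
From Stdlib Require Import Relations.
Import GRing.Theory Num.Theory.
Set Implicit Arguments. Unset Strict Implicit. Unset Printing Implicit Defensive.
Local Open Scope ring_scope.

Section Toggle.
Variable T : finType.
Implicit Types (A B : {set T}) (x y : T).

Definition toggle A x : {set T} := if x \in A then A :\ x else x |: A.

Lemma in_toggle A x y : (y \in toggle A x) = (y \in A) (+) (y == x).
Proof.
by rewrite /toggle; case: ifP => xA; rewrite !inE; case: eqVneq => [->|]; rewrite ?xA ?addbF.
Qed.

Lemma toggle_neq A x : toggle A x != A.
Proof. by apply/eqP => /setP/(_ x); rewrite in_toggle eqxx; case: (x \in A). Qed.

Lemma odd_card_toggle A x : odd #|toggle A x| = ~~ odd #|A|.
Proof.
rewrite /toggle; case: ifP => xA; last by rewrite cardsU1 xA.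
by rewrite [in RHS](cardsD1 x) xA /= negbK.
Qed.

Lemma toggle2_notin A x y : x \notin A -> y \notin A -> x != y ->
  toggle (toggle A x) y = A :|: [set x; y].
Proof.
move=> /negPf xA /negPf yA xy; apply/setP => z; rewrite !in_toggle !inE.
case: (eqVneq z x) => [->|_]; first by rewrite xA (negPf xy).
by case: (eqVneq z y) => [->|_]; rewrite ?yA ?addbF ?orbF.
Qed.

Lemma toggleK A x : toggle (toggle A x) x = A.
Proof. by apply/setP => y; rewrite !in_toggle addbK. Qed.

Lemma toggleC A x y : toggle (toggle A x) y = toggle (toggle A y) x.
Proof. by apply/setP => z; rewrite !in_toggle addbAC. Qed.

Definition symdiff A B : {set T} := [set x | (x \in A) (+) (x \in B)].

Lemma symdiff_eq0 A B : (symdiff A B == set0) = (A == B).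
Proof.
apply/eqP/eqP => [/setP eq0|->]; last by apply/setP => x; rewrite !inE addbb.
by apply/setP => x; move: (eq0 x); rewrite !inE => /negbT; rewrite negb_add => /eqP.
Qed.

Lemma symdiff_toggle A B x : x \in symdiff A B ->
  symdiff (toggle A x) B = symdiff A B :\ x.
Proof.
rewrite inE => xAB; apply/setP => y; rewrite !inE in_toggle.
case: eqVneq => [->|_] /=; last by rewrite addbF.
by move: xAB; case: (x \in A); case: (x \in B).
Qed.

Lemma exists_toggle_closer A B : A != B ->
  exists x, #|symdiff (toggle A x) B| = #|symdiff A B|.-1.
Proof.
rewrite -symdiff_eq0 => /set0Pn [x xAB]; exists x.
by rewrite symdiff_toggle // (cardsD1 x (symdiff A B)) xAB.
Qed.

End Toggle.

Lemma signr_sum_eq0 (R : numDomainType) (I : finType) (A : {set I}) (b : I -> bool) i :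
  i \in A -> \sum_(j in A) (-1) ^+ b j = 0 :> R -> exists2 j, j \in A & b j != b i.
Proof.
move=> iA; case: (pickP [pred j | (j \in A) && (b j != b i)]) => [j /andP[]|none].
  by exists j.
rewrite (eq_bigr (fun=> (-1) ^+ b i)) => [|j jA]; last first.
  by move: (none j); rewrite /= jA => /negbFE/eqP ->.
move/eqP; rewrite sumr_const mulrn_eq0 signr_eq0 orbF cards_eq0 => /eqP A0.
by move: iA; rewrite A0 inE.
Qed.

Section EulerCharacteristic.
Variable k : nat.
Implicit Types (S T : {set valuation k}) (u v nu : valuation k).

Definition of_set S : boolfun k := [ffun nu => nu \in S].

Lemma of_setK : cancel of_set (@sat k).
Proof. by move=> S; apply/setP => nu; rewrite inE ffunE. Qed.

Lemma satK : cancel (@sat k) of_set.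
Proof. by move=> phi; apply/ffunP => nu; rewrite ffunE inE. Qed.

Definition equiv_set S T := equiv_bf (of_set S) (of_set T).

(* Toggling [nu] in [S] lowers [eul] by one exactly when [lowers_eul S nu]. *)
Definition lowers_eul S nu := (nu \in S) (+) odd #|nu|.

Lemma lowers_eul_toggle S x : lowers_eul (toggle S x) x = ~~ lowers_eul S x.
Proof. by rewrite /lowers_eul in_toggle eqxx addbT addNb. Qed.

Lemma lowers_eul_toggle_neq S x y : y != x -> lowers_eul (toggle S x) y = lowers_eul S y.
Proof. by move=> /negPf yx; rewrite /lowers_eul in_toggle yx addbF. Qed.

Lemma eul_symdiff S T :
  eul (of_set T) = eul (of_set S) + \sum_(nu in symdiff S T) (-1) ^+ lowers_eul S nu.
Proof.
rewrite -[LHS](subrK (eul (of_set S))) addrC; congr (_ + _).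
rewrite /eul !of_setK.
rewrite big_mkcond [X in _ - X]big_mkcond [RHS]big_mkcond -sumrB /=.
apply: eq_bigr => nu _; rewrite inE /lowers_eul -signr_odd.
by case: (nu \in S); case: (nu \in T); rewrite /= ?subr0 ?sub0r ?subrr // signrN.
Qed.

Lemma eul_toggle S nu :
  eul (of_set (toggle S nu)) = eul (of_set S) + (-1) ^+ lowers_eul S nu.
Proof.
rewrite (eul_symdiff S); congr (_ + _).
have -> : symdiff S (toggle S nu) = [set nu].
  by apply/setP => x; rewrite !inE in_toggle addKb.
by rewrite big_set1.
Qed.

Lemma eul_toggle2 S u v : lowers_eul S u != lowers_eul S v ->
  eul (of_set (toggle (toggle S u) v)) = eul (of_set S).
Proof.
move=> luv; have vu : v != u by apply: contraNneq luv => ->.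
rewrite !eul_toggle lowers_eul_toggle_neq // -addrA; move: luv.
by case: (lowers_eul S u); case: (lowers_eul S v); rewrite ?addrN ?addNr ?addr0.
Qed.

Lemma step_plus_toggle2 (phi psi : boolfun k) nu l : step_plus phi psi nu l ->
  sat psi = toggle (toggle (sat phi) nu) (flip nu l) /\
  lowers_eul (sat phi) nu != lowers_eul (sat phi) (flip nu l).
Proof.
move=> [nuS [flipS ->]]; have flipnu : nu != flip nu l by rewrite eq_sym toggle_neq.
split; first by rewrite toggle2_notin.
by rewrite /lowers_eul (negPf nuS) (negPf flipS) odd_card_toggle; case: (odd _).
Qed.

Lemma equiv_eul (phi psi : boolfun k) : equiv_bf phi psi -> eul phi = eul psi.
Proof.
have step_eul (phi1 psi1 : boolfun k) nu l : step_plus phi1 psi1 nu l -> eul psi1 = eul phi1.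
  case/step_plus_toggle2 => sat_psi lowers_neq.
  by rewrite -(satK psi1) sat_psi eul_toggle2 // satK.
elim => [? ? [nu [l [/step_eul|/step_eul]]] | | ? ? ? _ -> _ ->] //.
Qed.

Lemma equiv_bf_sym (phi psi : boolfun k) : equiv_bf phi psi -> equiv_bf psi phi.
Proof.
elim => [? ? [nu [l step]]|x|x y z _ xy _ yz].
- by apply: rt_step; exists nu, l; tauto.
- exact: rt_refl.
- exact: rt_trans yz xy.
Qed.

Lemma lowers_eul_adjacent S u l :
  (lowers_eul S u != lowers_eul S (toggle u l)) = ((u \in S) == (toggle u l \in S)).
Proof.
by rewrite /lowers_eul odd_card_toggle; case: (u \in S); case: (_ \in S); case: (odd _).
Qed.

Lemma equiv_adjacent S u l : lowers_eul S u != lowers_eul S (toggle u l) ->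
  equiv_set S (toggle (toggle S u) (toggle u l)).
Proof.
rewrite lowers_eul_adjacent => /eqP fS.
have uflip : u != toggle u l by rewrite eq_sym toggle_neq.
have step S' : u \notin S' -> toggle u l \notin S' ->
    step_plus (of_set S') (of_set (toggle (toggle S' u) (toggle u l))) u l.
  by move=> uS' fS'; rewrite /step_plus !of_setK toggle2_notin.
case: (boolP (u \in S)) => uS; last first.
  by apply: rt_step; exists u, l; left; apply: step; rewrite -?fS.
set S' := toggle (toggle S u) (toggle u l).
have {1}-> : S = toggle (toggle S' u) (toggle u l) by rewrite /S' toggleC !toggleK.
apply: equiv_bf_sym; apply: rt_step; exists u, l; left; apply: step.
  by rewrite !in_toggle eqxx (negPf uflip) uS.
by rewrite /S' !in_toggle eqxx eq_sym (negPf uflip) -fS uS.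
Qed.

(* With [a] a coordinate where [u] and [v] differ, the adjacent pair
   [u, toggle u a] is toggled first or last, whichever keeps both steps
   [eul]-neutral; the rest is the induction hypothesis for [toggle u a, v]. *)
Lemma equiv_toggle2 S u v : lowers_eul S u != lowers_eul S v ->
  equiv_set S (toggle (toggle S u) v).
Proof.
move=> luv; have [n] : exists n, #|symdiff u v| = n.+1.
  exists #|symdiff u v|.-1; rewrite prednK // card_gt0 symdiff_eq0.
  by apply: contraNneq luv => ->.
elim: n S u luv => [|n IH] S u luv duv.
all: have uv : u != v by apply: contraNneq luv => ->.
all: have [a] := exists_toggle_closer uv; rewrite duv /= => dwv.
  by move/eqP: dwv luv; rewrite cards_eq0 symdiff_eq0 => /eqP <-; apply: equiv_adjacent.
have wv : toggle u a != v by rewrite -symdiff_eq0 -card_gt0 dwv.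
have wu : toggle u a != u := toggle_neq u a.
case: (boolP (lowers_eul S u != lowers_eul S (toggle u a))) => luw.
  apply: rt_trans (equiv_adjacent luw) _.
  have -> : toggle (toggle S u) v =
      toggle (toggle (toggle (toggle S u) (toggle u a)) (toggle u a)) v by rewrite toggleK.
  apply: IH dwv; rewrite lowers_eul_toggle !lowers_eul_toggle_neq ?(eq_sym v) //.
  by move: luv luw; case: (lowers_eul S _); case: (lowers_eul S _); case: (lowers_eul S _).
rewrite negbK in luw.
apply: rt_trans (IH S (toggle u a) _ dwv) _; first by rewrite -(eqP luw).
have -> : toggle (toggle S u) v =
    toggle (toggle (toggle (toggle S (toggle u a)) v) u) (toggle u a).
  apply/setP => x; rewrite !in_toggle.
  by case: (x \in S); case: (x == u); case: (x == v); case: (x == toggle u a).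
apply: equiv_adjacent.
rewrite (lowers_eul_toggle_neq _ wv) lowers_eul_toggle.
rewrite !lowers_eul_toggle_neq ?(eq_sym u (toggle u a)) //.
by rewrite -(eqP luw); case: (lowers_eul _ _).
Qed.

Lemma equiv_of_eul_eq S T : eul (of_set S) = eul (of_set T) -> equiv_set S T.
Proof.
have [n] := ubnP #|symdiff S T|; elim: n S => // n IH S ltST eulST.
have [/eqP|[u uST]] := set_0Vmem (symdiff S T).
  by rewrite symdiff_eq0 => /eqP ->; apply: rt_refl.
have [v vST luv] : exists2 v, v \in symdiff S T & lowers_eul S v != lowers_eul S u.
  apply: (signr_sum_eq0 (R := int) uST); apply: (addrI (eul (of_set S))).
  by rewrite addr0 -eul_symdiff eulST.
have vu : v != u by apply: contraNneq luv => ->.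
have uSv : u \in symdiff S T :\ v by rewrite in_setD1 eq_sym vu.
apply: rt_trans (equiv_toggle2 luv) (IH _ _ _); last by rewrite eul_toggle2.
rewrite symdiff_toggle ?symdiff_toggle //; move: ltST.
by rewrite (cardsD1 v) vST (cardsD1 u (symdiff S T :\ v)) uSv /= !add1n ltnS => /ltnW.
Qed.

End EulerCharacteristic.

Theorem proposition6p1 (k : nat) (hk : (1 <= k)%N) (phi phi' : boolfun k) :
  eul phi = eul phi' <-> equiv_bf phi phi'.
Proof.
split; last exact: equiv_eul.
move=> eul_eq; rewrite -(satK phi) -(satK phi').
by apply: equiv_of_eul_eq; rewrite !satK.
Qed.
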